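(* Let $P$ be a subprogram of a HeyVL program $S$ such that $\mathrm{vp}[S](Z)\preceq\mathrm{vp}[P](Z)$ for all expectations $Z$. If $X,Y$ are expectations with $X\not\preceq\mathrm{vp}[P](Y)$, then $P$ is an error-witnessing slice of $S$ with respect to $(X,Y)$.
   Context: Expectations are functions from program states to $[0,\infty]$, ordered pointwise by $\preceq$; $\mathrm{vp}[S]$ is the verification pre-expectation transformer of a HeyVL statement $S$. Write $\sigma\models\{X\}S\{Y\}$ iff $X(\sigma)\le\mathrm{vp}[S](Y)(\sigma)$, and $\models\{X\}S\{Y\}$ iff this holds for all states $\sigma$. A subprogram $P$ of $S$ (obtained by removing statements) is an error-witnessing slice w.r.t. $(X,Y)$ if (1) $\not\models\{X\}P\{Y\}$ and (2) for all states $\sigma'$, $\sigma'\not\models\{X\}P\{Y\}$ implies $\sigma'\not\models\{X\}S\{Y\}$. *)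

From HB Require Import structures.
From mathcomp Require Import all_boot all_order all_algebra.
From mathcomp Require Import all_classical all_reals.
From Stdlib Require List.
From mathcomp Require Import constructive_ereal ereal.
Set Implicit Arguments. Unset Strict Implicit. Unset Printing Implicit Defensive.
Import Order.TTheory GRing.Theory Num.Theory.
Local Open Scope classical_set_scope.
Local Open Scope ring_scope.
Local Open Scope ereal_scope.

Section HeyVL.
Variables (R : realType) (Val : Type).

Definition state := nat -> Val.
(* expectations (values intended to lie in [0, +oo]) *)
Definition expec := state -> \bar R.

Definition is_expectation (Z : expec) : Prop := forall s, 0 <= Z s.

Definition eleq (X Y : expec) : Prop := forall s, X s <= Y s.

Definition upd (s : state) (x : nat) (v : Val) : state :=
  fun y => if y == x then v else s y.

(* HeyVL statements (shallow embedding of expressions) *)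
Inductive stmt : Type :=
| Skip
| Rand (x : nat) (mu : seq ((state -> R) * (state -> Val)))
    (* x :~ p1 : t1 + ... + pn : tn ; x := t is Rand x [:: (1, t)] *)
| Seq (S1 S2 : stmt)
| Ite (b : state -> bool) (S1 S2 : stmt)
| Demonic (S1 S2 : stmt)
| Angelic (S1 S2 : stmt)
| Reward (a : expec)
| Assert (H : expec)
| Assume (H : expec)
| CoAssert (H : expec)
| CoAssume (H : expec)
| Havoc (x : nat)
| CoHavoc (x : nat)
| Validate
| CoValidate.

Fixpoint vp (S : stmt) (Z : expec) : expec :=
  match S with
  | Skip => Z
  | Rand x mu => fun s => \sum_(pe <- mu) ((pe.1 s)%:E * Z (upd s x (pe.2 s)))
  | Seq S1 S2 => vp S1 (vp S2 Z)
  | Ite b S1 S2 => fun s => if b s then vp S1 Z s else vp S2 Z s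
  | Demonic S1 S2 => fun s => Order.min (vp S1 Z s) (vp S2 Z s)
  | Angelic S1 S2 => fun s => Order.max (vp S1 Z s) (vp S2 Z s)
  | Reward a => fun s => a s + Z s
  | Assert H => fun s => Order.min (H s) (Z s)
  | Assume H => fun s => if H s <= Z s then +oo else Z s
  | CoAssert H => fun s => Order.max (H s) (Z s)
  | CoAssume H => fun s => if Z s <= H s then 0 else Z s
  | Havoc x => fun s => ereal_inf (range (fun v => Z (upd s x v)))
  | CoHavoc x => fun s => ereal_sup (range (fun v => Z (upd s x v)))
  | Validate => fun s => if Z s == +oo then +oo else 0
  | CoValidate => fun s => if Z s == 0 then 0 else +oo
  end.

Fixpoint wf (S : stmt) : Prop :=
  match S with
  | Skip | Havoc _ | CoHavoc _ | Validate | CoValidate => True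
  | Rand _ mu => forall s, (forall pe, Stdlib.Lists.List.In pe mu -> (0 <= pe.1 s)%R) /\
                           (\sum_(pe <- mu) pe.1 s = 1)%R
  | Seq S1 S2 | Ite _ S1 S2 | Demonic S1 S2 | Angelic S1 S2 => wf S1 /\ wf S2
  | Reward H | Assert H | Assume H | CoAssert H | CoAssume H => is_expectation H
  end.

(* P is a subprogram of S: obtained from S by removing statements
   (a removed statement is replaced by skip) *)
Inductive subprog : stmt -> stmt -> Prop :=
| sub_refl S : subprog S S
| sub_remove S : subprog Skip S
| sub_seq P1 P2 S1 S2 : subprog P1 S1 -> subprog P2 S2 -> subprog (Seq P1 P2) (Seq S1 S2)
| sub_ite b P1 P2 S1 S2 : subprog P1 S1 -> subprog P2 S2 -> subprog (Ite b P1 P2) (Ite b S1 S2)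
| sub_dem P1 P2 S1 S2 : subprog P1 S1 -> subprog P2 S2 -> subprog (Demonic P1 P2) (Demonic S1 S2)
| sub_ang P1 P2 S1 S2 : subprog P1 S1 -> subprog P2 S2 -> subprog (Angelic P1 P2) (Angelic S1 S2).

Definition holds_at (s : state) (X : expec) (S : stmt) (Y : expec) : Prop :=
  X s <= vp S Y s.

Definition valid (X : expec) (S : stmt) (Y : expec) : Prop :=
  forall s, holds_at s X S Y.

Definition error_witnessing_slice (S P : stmt) (X Y : expec) : Prop :=
  subprog P S /\
  ~ valid X P Y /\
  (forall s', ~ holds_at s' X P Y -> ~ holds_at s' X S Y).

End HeyVL.

From mathcomp Require Import all_boot all_order all_algebra.
From mathcomp Require Import all_classical all_reals.

Set Implicit Arguments. Unset Strict Implicit. Unset Printing Implicit Defensive.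
Import Order.TTheory.

Lemma holds_at_vp_le (R : realType) (Val : Type) (S P : stmt R Val)
    (X Y : expec R Val) (s : state Val) :
  (vp S Y s <= vp P Y s)%E -> holds_at s X S Y -> holds_at s X P Y.
Proof. by move=> le_SP XS; apply: le_trans XS le_SP. Qed.

Theorem lemma5 (R : realType) (Val : Type) (S P : stmt R Val) (X Y : expec R Val) :
  wf S ->
  subprog P S ->
  (forall Z : expec R Val, is_expectation Z -> eleq (vp S Z) (vp P Z)) ->
  is_expectation X -> is_expectation Y ->
  ~ eleq X (vp P Y) ->
  error_witnessing_slice S P X Y.
Proof.
move=> _ subPS vp_SP _ Y_ge0 X_not_le; split; first exact: subPS.
split; first by move=> valid_XPY; apply: X_not_le => s; exact: valid_XPY.
by move=> s XP_fails /(holds_at_vp_le (vp_SP Y Y_ge0 s)).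
Qed.
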